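(* Let $\mathcal{P}^d=(\mathcal{D},\varphi,\mathcal{E})$ be a trembling-hand (TH) problem for $\mathrm{LTL}_f$ planning in a deterministic domain $\mathcal{D}=(S,s_0,A,F_d,L)$, and let $\mathcal{M}=(S,s_0,A,\mathcal{T},L)$ be the MDP constructed from it (see context). Then a strategy is optimal for $\mathcal{M}$ with objective $\varphi$ if and only if it is optimal for $\mathcal{P}^d$; that is, $$\sigma_p^*=\arg\max_{\sigma_m}\ \Pr_{\mathcal{M}}^{\sigma_m}(\varphi),\qquad\text{where }\ \sigma_p^*=\arg\max_{\sigma_p}\ \Pr_{\mathcal{D}}^{\sigma_p,\mathcal{E}}(\varphi).$$
   Context: $\mathrm{LTL}_f$ is linear temporal logic interpreted over finite nonempty traces over a finite set $Prop$ of atomic propositions; $\pi\models\varphi$ denotes that a finite trace $\pi\in(2^{Prop})^+$ satisfies $\varphi$. A deterministic domain is $\mathcal{D}=(S,s_0,A,F_d,L)$ with $S$ a finite set of states, $s_0\in S$ initial, $A$ a finite set of actions, $A(s)\subseteq A$ the (nonempty) set of actions applicable at $s$, $F_d:S\times A\to S$ giving the successor $F_d(s,a)$ for $a\in A(s)$, and $L:S\to 2^{Prop}$ a labelling. A finite path is an alternating sequence $s_0a_0s_1\cdots s_k$ of states and actions starting at $s_0$ with $a_i\in A(s_i)$; its induced trace is $L(s_0)\cdots L(s_k)$. An agent strategy is a function $\sigma$ from finite paths to actions with $\sigma(\rho)$ applicable at the last state of $\rho$. Action-instruction errors: $\mathcal{E}=\{err(s,a)\}$, where for each $s\in S$ and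 $a\in A(s)$, $err(s,a)$ is a probability distribution over $A(s)$; $err(s,a)(a')$ is the probability that the agent actually instructs $a'$ when it intends $a$ at $s$; $supp(s,a)$ is its support. Perturbed paths: given a strategy $\sigma_p$, a perturbed path is a sequence of triples $(s_0,a_0,a_0')(s_1,a_1,a_1')\cdots$ where $a_i=\sigma_p(s_0a_0s_1\cdots a_{i-1}s_i)$ is the intended action, $a_i'\in supp(s_i,a_i)$ is the actually instructed action, and $s_{i+1}=F_d(s_i,a_i')$. The probability measure on perturbed paths is the one in which, at each step, $a_i'$ is drawn according to $err(s_i,a_i)$ independently given the history. $\Pr_{\mathcal{D}}^{\sigma_p,\mathcal{E}}(\varphi)$ is the probability of the set of perturbed paths having some $k\ge 0$ with $L(s_0)\cdots L(s_k)\models\varphi$. The TH problem $\mathcal{P}^d$ asks for a strategy maximizing this probability (an optimal strategy for $\mathcal{P}^d$). MDP: $\mathcal{M}=(S,s_0,A,\mathcal{T},L)$ with $\mathcal{T}:S\times A\times S\to[0,1]$, $\mathcal{T}(s,a,\cdot)$ a distribution for $a\in A(s)$; a deterministic (history-dependent) strategy $\sigma_m$ maps finite paths $s_0a_0\cdots s_k$ to actions in $A(s_k)$ and induces the standard probability measure on infinite paths; $\Pr_{\mathcal{M}}^{\sigma_m}(\varphi)$ is the probability of the set of paths $s_0a_0s_1\cdots$ having some $k\ge0$ with $L(s_0)\cdots L(s_k)\models\varphi$. Constructed MDP: $S,s_0,A,L$ (and applicability) as in $\mathcal{D}$, and for $s\in S$, $a\in A(s)$, $s'\in S$: $\mathcal{T}(s,a,s')=\sum_{a'\in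 A(s):\,F_d(s,a')=s'} err(s,a)(a')$ (so $\mathcal{T}(s,a,s')=0$ if no applicable $a'$ leads to $s'$). *)

From HB Require Import structures.
From mathcomp Require Import all_boot all_order all_algebra.
From mathcomp Require Import classical_sets reals constructive_ereal ereal.

Set Implicit Arguments.
Unset Strict Implicit.
Unset Printing Implicit Defensive.

Import Order.TTheory GRing.Theory Num.Theory.
Local Open Scope ring_scope.

Inductive ltlf (P : Type) : Type :=
| LTrue
| LAtom of P
| LNot of ltlf P
| LAnd of ltlf P & ltlf P
| LNext of ltlf P                 (* strong next *)
| LUntil of ltlf P & ltlf P.
Arguments LTrue {P}.

Fixpoint ltlf_sat {P : finType} (pi : seq {set P}) (f : ltlf P) (i : nat) : bool :=
  match f with
  | LTrue => true
  | LAtom p => (i < size pi)%N && (p \in nth (finset.set0 : {set P}) pi i)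
  | LNot g => ~~ ltlf_sat pi g i
  | LAnd g h => ltlf_sat pi g i && ltlf_sat pi h i
  | LNext g => (i.+1 < size pi)%N && ltlf_sat pi g i.+1
  | LUntil g h =>
      has (fun j => ltlf_sat pi h j && all (fun k => ltlf_sat pi g k) (index_iota i j))
          (index_iota i (size pi))
  end.

Definition ltlf_models {P : finType} (pi : seq {set P}) (f : ltlf P) : bool :=
  (0 < size pi)%N && ltlf_sat pi f 0.

(* Strategies: functions from finite paths s0 a0 s1 ... a_{k-1} s_k     *)
(* to actions; a path is encoded as the list of pairs (s_i,a_i), i<k,  *)
(* together with its last state s_k.                                   *)
Definition strategy (S A : Type) := seq (S * A) -> S -> A.

Section Planning.
Variables (R : realType) (S A P : finType).
Variables (s0 : S) (Aapp : S -> {set A}) (Fd : S -> A -> S) (L : S -> {set P}).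

Definition valid_strategy (sigma : strategy S A) : Prop :=
  forall h s, sigma h s \in Aapp s.

Definition err_wf (err : S -> A -> A -> R) : Prop :=
  forall s a, a \in Aapp s ->
    [/\ forall a', 0 <= err s a a',
        \sum_(a' : A) err s a a' = 1
      & forall a', a' \notin Aapp s -> err s a a' = 0].

Variable phi : ltlf P.

Definition reach_event (states : seq S) : bool :=
  has (fun k => ltlf_models (map L (take k.+1 states)) phi) (iota 0 (size states)).

Section TH.
Variable err : S -> A -> A -> R.

(* weight of the perturbed path whose actually instructed actions are acts,
   starting from history h and current state s *)
Fixpoint th_weight (sigma : strategy S A) (h : seq (S * A)) (s : S) (acts : seq A) : R :=
  match acts with
  | [::] => 1
  | a' :: r => err s (sigma h s) a' * th_weight sigma (rcons h (s, sigma h s)) (Fd s a') r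
  end.

Fixpoint th_states (sigma : strategy S A) (h : seq (S * A)) (s : S) (acts : seq A) : seq S :=
  match acts with
  | [::] => [:: s]
  | a' :: r => s :: th_states sigma (rcons h (s, sigma h s)) (Fd s a') r
  end.

(* probability that phi is satisfied by some prefix of length <= n+1 *)
Definition th_prob_upto (sigma : strategy S A) (n : nat) : R :=
  \sum_(t : n.-tuple A)
     th_weight sigma [::] s0 t * (reach_event (th_states sigma [::] s0 t))%:R.

(* Pr_D^{sigma,E}(phi): measure of the increasing union of the events above *)
Definition th_prob (sigma : strategy S A) : \bar R :=
  ereal_sup (range (fun n => (th_prob_upto sigma n)%:E)).

Definition th_optimal (sigma : strategy S A) : Prop :=
  valid_strategy sigma /\
  forall sigma', valid_strategy sigma' -> (th_prob sigma' <= th_prob sigma)%E.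
End TH.

Section MDP.
Variable T : S -> A -> S -> R.

Fixpoint mdp_weight (sigma : strategy S A) (h : seq (S * A)) (s : S) (ss : seq S) : R :=
  match ss with
  | [::] => 1
  | s' :: r => T s (sigma h s) s' * mdp_weight sigma (rcons h (s, sigma h s)) s' r
  end.

Definition mdp_prob_upto (sigma : strategy S A) (n : nat) : R :=
  \sum_(t : n.-tuple S) mdp_weight sigma [::] s0 t * (reach_event (s0 :: t))%:R.

Definition mdp_prob (sigma : strategy S A) : \bar R :=
  ereal_sup (range (fun n => (mdp_prob_upto sigma n)%:E)).

Definition mdp_optimal (sigma : strategy S A) : Prop :=
  valid_strategy sigma /\
  forall sigma', valid_strategy sigma' -> (mdp_prob sigma' <= mdp_prob sigma)%E.
End MDP.

Definition constructed_T (err : S -> A -> A -> R) (s : S) (a : A) (s' : S) : R :=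
  \sum_(a' in Aapp s | Fd s a' == s') err s a a'.

End Planning.

From HB Require Import structures.
From mathcomp Require Import all_boot all_order all_algebra.
From mathcomp Require Import classical_sets reals constructive_ereal ereal.

(* Summing over the instructed actions a' of a perturbed step and grouping them
   by the successor F_d(s,a') is exactly a step of the constructed MDP.  By
   induction on the horizon, the distribution of state sequences of length n+1
   under trembling-hand execution of a strategy coincides with the one it
   induces in the MDP, so both problems assign every strategy the same
   probability of satisfying phi, and hence have the same optimal strategies. *)

Set Implicit Arguments.
Unset Strict Implicit.
Unset Printing Implicit Defensive.
Import Order.TTheory GRing.Theory Num.Theory.
Local Open Scope ring_scope.

Lemma sum_tuple0 (V : nmodType) (T : finType) (F : 0.-tuple T -> V) :
  \sum_(t : 0.-tuple T) F t = F [tuple].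
Proof.
rewrite (eq_bigl (pred1 [tuple])) => [|t]; first by rewrite big_pred1_eq.
by rewrite /= (tuple0 t); apply/eqP.
Qed.

Lemma sum_tupleS (V : nmodType) (T : finType) n (F : n.+1.-tuple T -> V) :
  \sum_(t : n.+1.-tuple T) F t = \sum_(x : T) \sum_(t : n.-tuple T) F [tuple of x :: t].
Proof.
rewrite pair_big /= (reindex (fun p : T * n.-tuple T => [tuple of p.1 :: p.2])) //=.
exists (fun t => (thead t, [tuple of behead t])).
  by move=> [x t] _; congr pair; apply: val_inj.
by move=> t _; rewrite /= [RHS]tuple_eta.
Qed.

Section ConstructedMDP.
Variables (R : realType) (S A : finType).
Variables (Aapp : S -> {set A}) (Fd : S -> A -> S) (err : S -> A -> A -> R).

Lemma sum_constructed_T s a (g : S -> R) :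
  (forall a', a' \notin Aapp s -> err s a a' = 0) ->
  \sum_(s' : S) constructed_T Aapp Fd err s a s' * g s' =
  \sum_(a' : A) err s a a' * g (Fd s a').
Proof.
move=> err_out; rewrite (bigID (mem (Aapp s))) /= [X in _ + X]big1 ?addr0; last first.
  by move=> a' /err_out ->; rewrite mul0r.
rewrite (partition_big (Fd s) xpredT) //=.
apply: eq_bigr => s' _; rewrite /constructed_T big_distrl /=.
by apply: eq_bigr => a' /andP[_ /eqP ->].
Qed.

Hypothesis err_wfE : err_wf Aapp err.
Variable sigma : strategy S A.
Hypothesis sigma_valid : valid_strategy Aapp sigma.

Lemma sum_th_weight_mdp_weight n h s (f : seq S -> R) :
  \sum_(t : n.-tuple A) th_weight Fd err sigma h s t * f (th_states Fd sigma h s t) =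
  \sum_(t : n.-tuple S) mdp_weight (constructed_T Aapp Fd err) sigma h s t * f (s :: t).
Proof.
elim: n h s f => [|n IHn] h s f; first by rewrite !sum_tuple0.
rewrite !sum_tupleS /=.
have [_ _ err_out] := err_wfE (sigma_valid h s).
under eq_bigr => a' _.
  under eq_bigr do rewrite -mulrA.
  rewrite -big_distrr /= (IHn _ _ (fun l => f (s :: l))).
  over.
under [RHS]eq_bigr => s' _.
  under eq_bigr do rewrite -mulrA.
  rewrite -big_distrr /=.
  over.
by rewrite sum_constructed_T.
Qed.

Variables (P : finType) (s0 : S) (L : S -> {set P}) (phi : ltlf P).

Lemma mdp_prob_uptoE n :
  mdp_prob_upto s0 L phi (constructed_T Aapp Fd err) sigma n =
  th_prob_upto s0 Fd L phi err sigma n.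
Proof.
by rewrite /mdp_prob_upto /th_prob_upto
  (sum_th_weight_mdp_weight _ _ _ (fun l => (reach_event L phi l)%:R)).
Qed.

Lemma mdp_probE :
  mdp_prob s0 L phi (constructed_T Aapp Fd err) sigma = th_prob s0 Fd L phi err sigma.
Proof.
by rewrite /mdp_prob /th_prob (boolp.funext mdp_prob_uptoE).
Qed.

End ConstructedMDP.

Theorem theorem1 (R : realType) (S A P : finType)
    (s0 : S) (Aapp : S -> {set A}) (Fd : S -> A -> S) (L : S -> {set P})
    (err : S -> A -> A -> R) (phi : ltlf P) :
  (forall s, Aapp s != finset.set0) ->
  err_wf Aapp err ->
  forall sigma : strategy S A,
    mdp_optimal s0 Aapp L phi (constructed_T Aapp Fd err) sigma <->
    th_optimal s0 Aapp Fd L phi err sigma.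
Proof.
(* Nonemptiness of A(s) only guarantees that valid strategies exist. *)
move=> _ err_wfE sigma.
have probE sigma' (sigma'_valid : valid_strategy Aapp sigma') :=
  mdp_probE Fd err_wfE sigma'_valid s0 L phi.
split=> -[sigma_valid opt]; split=> // sigma' sigma'_valid.
  have := opt _ sigma'_valid.
  by rewrite (probE _ sigma_valid) (probE _ sigma'_valid).
have := opt _ sigma'_valid.
by rewrite -(probE _ sigma_valid) -(probE _ sigma'_valid).
Qed.
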